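(* (i) Let $G$ be a graph, $c$ a Grundy-coloring of $G$ using $k$ colors, and $u$ a vertex with $c(u)=k$. Let $H$ be a subgraph of $G$ of minimum cardinality such that $u\in V(H)$ and the restriction of $c$ to $V(H)$ is a Grundy-coloring of $H$ with $k$ colors. Then $V(H)\subseteq B(u,k-1)\subseteq B(u,d_G(u))$. Moreover, either $V(H)\subseteq B(u,\Delta(u))$ (and hence $V(H)\subseteq V(G(u))$), or for some neighbor $w$ of $u$, $V(H)\subseteq B(w,\Delta(w))$ (and hence $V(H)\subseteq V(G(w))$). (ii) For any graph $G$, $\Gamma(G)=\max_{v\in V(G)}\Gamma(G(v))=\max_{v\in V(G)}\Gamma_{G(v)}(v)$.
   Context: Graphs are finite and simple. A Grundy-coloring of $G$ is a proper coloring with nonempty color classes $C_1,\ldots,C_k$ (color $i$ on $C_i$) such that for $i<j$ each vertex of $C_j$ has a neighbor in $C_i$; $\Gamma(G)$ is the maximum number of colors of a Grundy-coloring, and $\Gamma_G(v)$ is the maximum color of $v$ over Grundy-colorings of $G$. $d_G(v)$ is the degree and $d_G(u,v)$ the distance. $B(u,r)=\{v\in V(G): d_G(u,v)\le r\}$. For $u\in V(G)$, $\Delta(u)=\max\{d(v): v\in N(u),\ d(v)\le d(u)\}$, and $G(u)$ is the induced subgraph $G[B(u,\Delta(u))]$. *)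

(* Simple graph = symmetric irreflexive relation e on a finType T. *)
From mathcomp Require Import all_boot all_order.
Set Implicit Arguments. Unset Strict Implicit. Unset Printing Implicit Defensive.

Section Defs.
Variable T : finType.

Definition deg (e : rel T) (v : T) : nat := #|[set w | e v w]|.

Definition ball (e : rel T) (u : T) (r : nat) : {set T} :=
  iter r (fun A : {set T} => A :|: [set y | [exists x in A, e x y]]) [set u].

(* Delta(u) = max { d(v) : v in N(u), d(v) <= d(u) }  (0 if this set is empty) *)
Definition Delta (e : rel T) (u : T) : nat :=
  \max_(v | e u v && (deg e v <= deg e u)) deg e v.

(* vertex set of G(u) = G[B(u, Delta(u))] *)
Definition Gset (e : rel T) (u : T) : {set T} := ball e u (Delta e u).

(* c is a Grundy-coloring with colour classes C_1..C_k of the graph with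
   vertex set S and edge relation f (only vertices of S matter). *)
Definition grundyb (S : {set T}) (f : rel T) (k : nat) (c : T -> nat) : bool :=
  [&& [forall x in S, (0 < c x) && (c x <= k)],
      [forall i : 'I_k.+1, (0 < i) ==> [exists x in S, c x == i]],
      [forall x in S, forall y in S, f x y ==> (c x != c y)] &
      [forall x in S, forall i : 'I_k.+1,
          ((0 < i) && (i < c x)) ==> [exists y in S, f x y && (c y == i)]]].

Definition subgraph (e : rel T) (S : {set T}) (f : rel T) : Prop :=
  symmetric f /\ forall x y, f x y -> [/\ x \in S, y \in S & e x y].

(* Grundy number of the graph (S, f): a Grundy-colouring uses at most #|S|
   colours, so colourings with values in 'I_(#|S|.+1) are enough. *)
Definition gamma (S : {set T}) (f : rel T) : nat :=
  \max_(k < #|S|.+1 | [exists c : {ffun T -> 'I_(#|S|.+1)},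
                         grundyb S f k (fun x => c x)]) k.

Definition gamma_v (S : {set T}) (f : rel T) (v : T) : nat :=
  \max_(c : {ffun T -> 'I_(#|S|.+1)} |
          [exists k : 'I_(#|S|.+1), grundyb S f k (fun x => c x)]) (c v : nat).

End Defs.

(* Let c be a Grundy colouring, u a vertex of colour k >= 2 and w a neighbour of u of colour
   k - 1.  The core, made of u and of all vertices reachable by colour-decreasing paths starting
   at w or at a neighbour of u of colour < k - 1, is still Grundy-coloured by c with k colours,
   and w is its only vertex of colour k - 1; exchanging the colours of u and w therefore gives a
   second Grundy colouring of the core, now with w on top.  The core lies within distance k - 1
   of both u and w, and both have degree at least k - 1: if deg w <= deg u then
   Delta(u) >= k - 1 and the core lies in G(u), otherwise Delta(w) >= k - 1 and it lies in G(w).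
   A minimal subgraph carrying the colouring is its own core, which gives (i); extending the
   colouring of the core greedily to G(u), resp. G(w), gives a Grundy colouring there in which
   u, resp. w, has colour k, which gives (ii). *)

From mathcomp Require Import all_boot all_order.
From mathcomp Require Import zify.
Set Implicit Arguments. Unset Strict Implicit. Unset Printing Implicit Defensive.

Section Ball.
Variables (T : finType) (R : rel T).
Implicit Types (x y z : T) (m n : nat).

Lemma ballS y n :
  ball R y n.+1 = ball R y n :|: [set z | [exists x in ball R y n, R x z]].
Proof. by []. Qed.

Lemma ball_center y n : y \in ball R y n.
Proof. by elim: n => [|n IHn]; rewrite ?set11 // ballS inE IHn. Qed.

Lemma sub_ball y m n : m <= n -> ball R y m \subset ball R y n.
Proof.
move=> /subnK <-; elim: (n - m) => [|d IHd] //.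
by apply: subset_trans IHd _; rewrite addSn ballS subsetUl.
Qed.

Lemma ball_step y n x z : x \in ball R y n -> R x z -> z \in ball R y n.+1.
Proof.
by move=> xy Rxz; rewrite ballS !inE; apply/orP; right; apply/existsP; exists x; rewrite xy.
Qed.

Lemma ballSP y n z :
  z \in ball R y n.+1 -> z \in ball R y n \/ exists2 x, x \in ball R y n & R x z.
Proof. by rewrite ballS !inE => /orP[|/existsP[x /andP[]]]; [left | right; exists x]. Qed.

Lemma ball_ind (P : T -> Prop) y n :
  P y -> (forall a b, P a -> R a b -> P b) -> forall x, x \in ball R y n -> P x.
Proof.
move=> Py PR; elim: n => [|n IHn] x; first by move/set1P->.
by case/ballSP=> [/IHn // | [z /IHn Pz /(PR _ _ Pz)]].
Qed.

Lemma ball_trans y x z m n :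
  x \in ball R y m -> z \in ball R x n -> z \in ball R y (m + n).
Proof.
move=> xy; elim: n z => [|n IHn] z; first by rewrite addn0 => /set1P->.
rewrite addnS; case/ballSP=> [/IHn | [t /IHn ty /(ball_step ty) //]].
exact/subsetP/sub_ball.
Qed.

End Ball.

Lemma sub_ball_rel (T : finType) (R R' : rel T) y n :
  subrel R R' -> ball R y n \subset ball R' y n.
Proof.
move=> RR'; apply/subsetP; elim: n => [|n IHn] x; first by move/set1P->; apply: ball_center.
case/ballSP=> [/IHn | [z /IHn zy /RR' /(ball_step zy) //]].
exact/subsetP/sub_ball.
Qed.

Section Decreasing.
Variables (T : finType) (R : rel T) (c : T -> nat).
Hypothesis R_decr : forall a b, R a b -> c b < c a.

Lemma ball_decr y n x : x \in ball R y n -> c x <= c y /\ x \in ball R y (c y - c x).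
Proof.
elim: n x => [|n IHn] x; first by move/set1P->; rewrite subnn ball_center.
case/ballSP=> [/IHn // | [z /IHn [czy zy] /[dup] /R_decr cxz /(ball_step zy) xy]].
split; first exact: leq_trans (ltnW cxz) czy.
by apply: subsetP xy; apply: sub_ball; lia.
Qed.

End Decreasing.

Section GrundyColouring.
Variable T : finType.
Implicit Types (S : {set T}) (f : rel T) (c : T -> nat).

Definition grundy_col S f c : Prop :=
  forall x, x \in S -> [/\ 0 < c x,
    forall y, y \in S -> f x y -> c y != c x &
    forall i, 0 < i < c x -> exists2 y, y \in S & f x y /\ c y = i].

Definition induced f S : rel T := fun a b => [&& f a b, a \in S & b \in S].

Lemma leq_card_onto (A : {set T}) (h : T -> nat) m :
  (forall i, 0 < i <= m -> exists2 x, x \in A & h x = i) -> m <= #|A|.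
Proof.
move=> onto; rewrite -(size_iota 1 m) -(size_image h A).
apply: uniq_leq_size => [|i]; first exact: iota_uniq.
rewrite mem_iota => /andP[i_gt0 ltim]; have [|x xA <-] := onto i; first by lia.
exact: image_f.
Qed.

Lemma grundy_col_colours S f c i :
  grundy_col S f c -> 0 < i <= \max_(x in S) c x -> exists2 x, x \in S & c x = i.
Proof.
move=> gc /andP[i_gt0 leiM]; have [|x xS Mx] := eq_bigmax_cond c (A := mem S).
  by rewrite card_gt0; apply: contraTneq leiM => ->; rewrite big_set0 -ltnNge.
move: leiM; rewrite Mx leq_eqVlt => /orP[/eqP-> | ltix]; first by exists x.
by have [_ _ /(_ i)[|y yS []]] := gc x xS; [rewrite i_gt0 | exists y].
Qed.

Lemma grundybE S f k c : grundyb S f k c <-> grundy_col S f c /\ \max_(x in S) c x = k.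
Proof.
split.
  case/and4P=> /forallP rng /forallP hit /forallP prop /forallP low.
  have ck x : x \in S -> 0 < c x <= k by move: (rng x) => /implyP.
  split.
    move=> x xS; have /andP[cx_gt0 _] := ck x xS.
    split=> // [y yS fxy | i /andP[i_gt0 ltix]].
      move: (prop x) => /implyP/(_ xS)/forallP/(_ y)/implyP/(_ yS)/implyP/(_ fxy).
      by rewrite eq_sym.
    have ltik : i < k.+1 by have := ck x xS; lia.
    move: (low x) => /implyP/(_ xS)/forallP/(_ (Ordinal ltik))/implyP.
    rewrite /= i_gt0 ltix => /(_ isT)/existsP[y /and3P[yS fxy /eqP]]; by exists y.
  apply/eqP; rewrite eqn_leq; apply/andP; split.
    by apply/bigmax_leqP => x /ck /andP[].
  clear rng prop low; case: k ck hit => // k ck /(_ ord_max)/implyP/(_ isT).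
  case/existsP=> x /andP[xS /eqP cx].
  by have := leq_bigmax_cond (F := c) _ xS; rewrite cx.
case=> gc <-; apply/and4P; split; apply/forallP.
- move=> x; apply/implyP => xS; have [-> _ _] := gc x xS; exact: leq_bigmax_cond.
- move=> i; apply/implyP => i_gt0; have [|x xS cx] := grundy_col_colours (i := i) gc.
    by rewrite i_gt0 -ltnS ltn_ord.
  by apply/existsP; exists x; rewrite xS cx eqxx.
- move=> x; apply/implyP => xS; apply/forallP => y; apply/implyP => yS; apply/implyP => fxy.
  by have [_ /(_ y yS fxy) + _] := gc x xS; rewrite eq_sym.
- move=> x; apply/implyP => xS; apply/forallP => i; apply/implyP => /andP[i_gt0 ltix].
  have [_ _ /(_ i)[|y yS [fxy cy]]] := gc x xS; first by rewrite i_gt0.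
  by apply/existsP; exists y; rewrite yS fxy cy eqxx.
Qed.

Lemma grundyb_card S f k c : grundyb S f k c -> k <= #|S|.
Proof.
by case/grundybE=> gc <-; apply: (leq_card_onto (h := c)) => i /(grundy_col_colours gc).
Qed.

Lemma grundy_col_ext S f f' c c' :
  {in S, c =1 c'} -> {in S &, f =2 f'} -> grundy_col S f c -> grundy_col S f' c'.
Proof.
move=> Ec Ef gc x xS; rewrite -Ec //; have [cx_gt0 prop low] := gc x xS.
split=> // [y yS | i /low[y yS [fxy cy]]]; first by rewrite -Ef // -Ec //; apply: prop.
by exists y; rewrite // -Ef // -Ec.
Qed.

Lemma grundyb_ext S f f' k c c' :
  {in S, c =1 c'} -> {in S &, f =2 f'} -> grundyb S f k c -> grundyb S f' k c'.
Proof.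
move=> Ec Ef /grundybE[gc <-]; apply/grundybE; split; first exact: grundy_col_ext gc.
by apply: eq_bigr => x /Ec.
Qed.

Lemma grundy_col_induced S f c : grundy_col S f c -> grundy_col S (induced f S) c.
Proof. by apply: grundy_col_ext => // x y xS yS; rewrite /induced xS yS !andbT. Qed.

Lemma grundyb_top S f c u :
  grundy_col S f c -> u \in S -> {in S, forall x, c x <= c u} -> grundyb S f (c u) c.
Proof.
move=> gc uS top; apply/grundybE; split=> //; apply/eqP; rewrite eqn_leq.
by rewrite (leq_bigmax_cond (F := c) _ uS) andbT; apply/bigmax_leqP.
Qed.

Lemma grundy_col_set1 S f c u :
  grundy_col S f c -> u \in S -> c u <= 1 -> grundy_col [set u] f c.
Proof.
move=> gc uS cu_le1 x /set1P->; have [cu_gt0 prop _] := gc u uS.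
split=> // [y /set1P-> /(prop u uS) | i]; [by rewrite eqxx | lia].
Qed.

Lemma grundyb_ffun S f k c : grundyb S f k c ->
  exists2 cf : {ffun T -> 'I_#|S|.+1},
    grundyb S f k (fun x => cf x) & {in S, forall x, cf x = c x :> nat}.
Proof.
move=> g; have ckS x : x \in S -> c x < #|S|.+1.
  case/grundybE: (g) => _ Mk xS; rewrite ltnS (leq_trans _ (grundyb_card g)) // -Mk.
  exact: leq_bigmax_cond.
pose cf : {ffun T -> 'I_#|S|.+1} := [ffun x => inord (c x)].
have Ecf : {in S, forall x, cf x = c x :> nat} by move=> x xS; rewrite ffunE inordK ?ckS.
by exists cf => //; apply: grundyb_ext g => // x /Ecf.
Qed.

Lemma gamma_ge S f k c : grundyb S f k c -> k <= gamma S f.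
Proof.
move=> g; have [cf gcf _] := grundyb_ffun g.
have ltkS : k < #|S|.+1 by rewrite ltnS (grundyb_card g).
apply: (leq_bigmax_cond (F := fun i : 'I_#|S|.+1 => nat_of_ord i) (Ordinal ltkS)).
by apply/existsP; exists cf.
Qed.

Lemma gamma_v_ge S f k c v : grundyb S f k c -> v \in S -> c v <= gamma_v S f v.
Proof.
move=> g vS; have [cf gcf <- //] := grundyb_ffun g.
have ltkS : k < #|S|.+1 by rewrite ltnS (grundyb_card g).
apply: (leq_bigmax_cond (F := fun cf : {ffun T -> 'I_#|S|.+1} => nat_of_ord (cf v)) cf).
by apply/existsP; exists (Ordinal ltkS).
Qed.

Lemma gamma_v_le_gamma S f v : v \in S -> gamma_v S f v <= gamma S f.
Proof.
move=> vS; apply/bigmax_leqP => cf /existsP[k g]; apply: leq_trans (gamma_ge g).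
by case/grundybE: g => _ <-; apply: leq_bigmax_cond.
Qed.

Variable e : rel T.

Lemma subgraph_induced S S' f : subgraph e S f -> subgraph e S' (induced f S').
Proof.
case=> f_sym fS; split=> [a b | a b /and3P[/fS[_ _ eab] aS' bS']]; last by [].
by rewrite /induced f_sym [(a \in S') && _]andbC.
Qed.

Lemma grundy_col_deg S f c x :
  subrel f e -> grundy_col S f c -> x \in S -> c x - 1 <= deg e x.
Proof.
move=> fe gc xS; apply: (leq_card_onto (h := c)) => i ltix.
have [_ _ /(_ i)[|y _ [/fe exy cy]]] := gc x xS; first by lia.
by exists y; rewrite ?inE.
Qed.

Lemma Delta_ge a b : e a b -> deg e b <= deg e a -> deg e b <= Delta e a.
Proof. by move=> eab le_ba; apply: (leq_bigmax_cond (F := deg e)); rewrite eab. Qed.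

End GrundyColouring.

Section Extension.
Variables (T : finType) (e : rel T).
Hypotheses (e_sym : symmetric e) (e_irr : irreflexive e).
Implicit Types (S B : {set T}) (c : T -> nat).

Lemma grundy_col_extend1 S c v :
  grundy_col S e c -> exists2 c', grundy_col (v |: S) e c' & {in S, c' =1 c}.
Proof.
move=> gc; have [vS | vNS] := boolP (v \in S).
  suff -> : v |: S = S by exists c.
  by apply/setUidPr; rewrite sub1set.
pose free j := (0 < j) && [forall y in S, e v y ==> (c y != j)].
have free_ex : exists j, free j.
  exists (\max_(y in S) c y).+1; apply/forallP => y; apply/implyP => yS; apply/implyP => _.
  by rewrite neq_ltn ltnS leq_bigmax_cond.
have [m /andP[m_gt0 /forallP m_free] m_min] := ex_minnP free_ex.
pose c' x := if x == v then m else c x.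
have c'S : {in S, c' =1 c} by move=> x xS; rewrite /c' ifN //; apply: contraNneq vNS => <-.
exists c' => // x /setU1P[-> | xS].
  have c'v : c' v = m by rewrite /c' eqxx.
  rewrite c'v; split=> // [y /setU1P[-> | yS] evy | i /andP[i_gt0 ltim]].
  - by rewrite e_irr in evy.
  - by rewrite c'S //; move: (m_free y) => /implyP/(_ yS)/implyP/(_ evy).
  have : ~~ free i by apply: contraTN ltim => /m_min; rewrite -leqNgt.
  rewrite /free i_gt0 => /forallPn[y]; rewrite !negb_imply => /and4P[yS evy /eqP cy _].
  by exists y; rewrite ?setU1r // c'S.
rewrite c'S //; have [cx_gt0 prop low] := gc x xS.
split=> // [y /setU1P[-> exv | yS exy] | i /low[y yS [exy cy]]].
- rewrite /c' eqxx eq_sym; rewrite e_sym in exv.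
  by move: (m_free x) => /implyP/(_ xS)/implyP/(_ exv).
- by rewrite c'S //; apply: prop.
by exists y; rewrite ?setU1r // c'S.
Qed.

Lemma grundy_col_extend S B c : S \subset B -> grundy_col S e c ->
  exists2 c', grundy_col B e c' & {in S, c' =1 c}.
Proof.
move=> /setUidPr <- gc; rewrite -[B]set_enum.
elim: (enum B) => [|v s [c1 gc1 c1S]]; first by exists c; rewrite // set_nil setU0.
rewrite set_cons setUCA; have [c' gc' c'S] := grundy_col_extend1 v gc1.
by exists c' => // x xS; rewrite c'S ?c1S ?inE ?xS.
Qed.

Lemma grundy_col_gamma_v S B c v :
  S \subset B -> grundy_col S e c -> v \in S -> c v <= gamma_v B e v.
Proof.
move=> SB gc vS; have [c' gc' <- //] := grundy_col_extend SB gc.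
apply: (gamma_v_ge (k := \max_(x in B) c' x)); last exact: (subsetP SB).
by apply/grundybE; split.
Qed.

Lemma gamma_subset S B : S \subset B -> gamma S e <= gamma B e.
Proof.
move=> SB; apply/bigmax_leqP => k /existsP[cf /grundybE[gc <-]].
have [c' gc' c'S] := grundy_col_extend SB gc.
apply: (@leq_trans (\max_(x in B) c' x)).
  apply/bigmax_leqP => x xS; rewrite -c'S //.
  exact: (leq_bigmax_cond (F := c') _ (subsetP SB x xS)).
by apply: (gamma_ge (c := c')); apply/grundybE; split.
Qed.

End Extension.

Definition descent (T : finType) (f : rel T) (c : T -> nat) : rel T :=
  fun a b => f a b && (c b < c a).

Section Core.
Variables (T : finType) (e : rel T) (S : {set T}) (f : rel T) (c : T -> nat) (u w : T).
Hypotheses (fS : subgraph e S f) (gc : grundy_col S f c) (uS : u \in S).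
Hypotheses (fuw : f u w) (cw : c w = c u - 1).

Definition first_step : {set T} := [set y | f u y && ((y == w) || (c y < c w))].

Definition core : {set T} := u |: \bigcup_(y in first_step) ball (descent f c) y (c y).

Let descent_decr a b : descent f c a b -> c b < c a. Proof. by case/andP. Qed.
Let fe : subrel f e. Proof. by move=> a b /fS.2[]. Qed.
Let f_in a b : f a b -> a \in S /\ b \in S. Proof. by case/fS.2. Qed.
Let wS : w \in S. Proof. by case: (f_in fuw). Qed.
Let cw_gt0 : 0 < c w. Proof. by case: (gc wS). Qed.
Let cw_lt : c w < c u. Proof. by lia. Qed.
Let uNw : u != w. Proof. by apply: contraTneq cw_lt => ->; rewrite ltnn. Qed.

Lemma coreP x : x \in core ->
  x = u \/ exists2 y, y \in first_step & x \in ball (descent f c) y (c y).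
Proof. by case/setU1P=> [-> | /bigcupP[y]]; [left | right; exists y]. Qed.

Lemma first_step_core y : y \in first_step -> y \in core.
Proof.
by move=> y1; apply/setU1P; right; apply/bigcupP; exists y => //; apply: ball_center.
Qed.

Lemma u_core : u \in core. Proof. exact: setU11. Qed.

Lemma w_core : w \in core. Proof. by apply: first_step_core; rewrite inE fuw eqxx. Qed.

Lemma core_sub : core \subset S.
Proof.
apply/subsetP=> x /coreP[-> // | [y]]; rewrite inE => /andP[/f_in[_ yS] _].
by apply: (ball_ind (P := fun z => z \in S) yS) => a b _ /andP[/f_in[]].
Qed.

Lemma core_below x : x \in core -> x != u -> x != w -> c x < c w.
Proof.
case/coreP=> [-> | [y]]; first by rewrite eqxx.
rewrite inE => /andP[_ /orP[/eqP-> | cyw]] /(ball_decr descent_decr)[cxy xy] _.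
  rewrite ltn_neqAle cxy andbT; apply: contra => /eqP cxw.
  by move: xy; rewrite cxw subnn => /set1P->.
by move=> _; apply: leq_ltn_trans cxy cyw.
Qed.

Lemma core_closed x z : x \in core -> x != u -> f x z -> c z < c x -> z \in core.
Proof.
case/coreP=> [-> | [y y1 xy] _ fxz czx]; first by rewrite eqxx.
have /(ball_decr descent_decr)[_ zy] : z \in ball (descent f c) y (c y).+1.
  by apply: ball_step xy _; rewrite /descent fxz czx.
apply/setU1P; right; apply/bigcupP; exists y => //.
by apply: subsetP zy; apply: sub_ball; rewrite leq_subr.
Qed.

Lemma core_lower x i :
  x \in core -> 0 < i < c x -> exists2 y, y \in core & f x y /\ c y = i.
Proof.
move=> xc /andP[i_gt0 ltix]; have xS := subsetP core_sub x xc.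
have [_ _ /(_ i)[|y yS [fxy cy]]] := gc xS; first by rewrite i_gt0.
have [xu | xNu] := eqVneq x u; last by exists y; rewrite // (core_closed xc xNu fxy) ?cy.
have [iw | iNw] := eqVneq i (c w); first by exists w; rewrite ?xu ?w_core.
exists y => //; apply: first_step_core; rewrite inE -xu fxy cy /=.
by apply/orP; right; move: ltix; rewrite xu; lia.
Qed.

Lemma grundy_col_core : grundy_col core f c.
Proof.
move=> x xc; have [cx_gt0 prop _] := gc (subsetP core_sub x xc).
by split=> // [y /(subsetP core_sub) | i]; [apply: prop | apply: core_lower].
Qed.

Lemma core_top : {in core, forall x, c x <= c u}.
Proof.
move=> x xc; have [-> | xNu] := eqVneq x u; first exact: leqnn.
have [-> | xNw] := eqVneq x w; first exact: ltnW.
exact: ltnW (ltn_trans (core_below xc xNu xNw) cw_lt).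
Qed.

Definition swap_col x := if x == w then c u else if x == u then c w else c x.

Lemma swap_colP x : x \in core ->
  [\/ x = w /\ swap_col x = c u, x = u /\ swap_col x = c w
     | swap_col x = c x /\ c x < c w].
Proof.
rewrite /swap_col => xc; have [-> | xNw] := eqVneq x w; first by constructor 1.
have [-> | xNu] := eqVneq x u; first by constructor 2.
by constructor 3; split=> //; apply: core_below.
Qed.

Lemma swap_col_low y : y \in core -> c y < c w -> swap_col y = c y.
Proof. by move=> yc; case: (swap_colP yc) => [[-> _] | [-> _] | [-> _]] //; lia. Qed.

Lemma swap_col_le x : x \in core -> x != w -> swap_col x <= c x /\ swap_col x <= c w.
Proof.
move=> xc xNw; case: (swap_colP xc) => [[xw _] | [-> ->] | [-> ?]]; try lia.
by rewrite xw eqxx in xNw.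
Qed.

Lemma grundy_col_swap : grundy_col core f swap_col.
Proof.
move=> x xc; have xS := subsetP core_sub x xc; have [cx_gt0 prop _] := gc xS.
split=> [| y yc fxy | i /andP[i_gt0 ltix]].
- by case: (swap_colP xc) => [[_ ->] | [_ ->] | [-> _]]; lia.
- have := prop y (subsetP core_sub y yc) fxy.
  by case: (swap_colP xc) => [[-> ->] | [-> ->] | [-> ?]];
     case: (swap_colP yc) => [[-> ->] | [-> ->] | [-> ?]]; lia.
have [xw | xNw] := eqVneq x w.
  have [iw | iNw] := eqVneq i (c w).
    by exists u; rewrite ?u_core // xw iw /swap_col (negbTE uNw) eqxx fS.1.
  have ltiw : i < c w by move: ltix; rewrite xw /swap_col eqxx; lia.
  have [|y yc [fwy cy]] := core_lower w_core (i := i); first by rewrite i_gt0.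
  by exists y; rewrite // xw swap_col_low ?cy.
have [le_x le_w] := swap_col_le xc xNw.
have [|y yc [fxy cy]] := core_lower xc (i := i); first by rewrite i_gt0 (leq_trans ltix).
by exists y; rewrite // swap_col_low ?cy // (leq_trans ltix).
Qed.

Lemma descent_ball y n x :
  x \in ball (descent f c) y n -> x \in ball e y (c y - c x).
Proof.
case/(ball_decr descent_decr) => _; apply: subsetP.
by apply: sub_ball_rel => a b /andP[/fe].
Qed.

Lemma core_ball_u : core \subset ball e u (c u - 1).
Proof.
apply/subsetP=> x xc; case/coreP: (xc) => [-> | [y]]; first exact: ball_center.
rewrite inE => /andP[fuy /orP y_sel] /descent_ball xy.
have [cx_gt0 _ _] := gc (subsetP core_sub x xc).
have cyw : c y <= c w by case: y_sel => [/eqP-> | /ltnW].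
have := ball_trans (ball_step (ball_center e u 0) (fe fuy)) xy.
by apply: subsetP; apply: sub_ball; lia.
Qed.

Lemma core_ball_w : core \subset ball e w (c u - 1).
Proof.
have uw : u \in ball e w 1 by apply: ball_step (ball_center e w 0) _; rewrite fe // fS.1.
apply/subsetP=> x xc; case/coreP: (xc) => [-> | [y]].
  by apply: subsetP uw; apply: sub_ball; lia.
rewrite inE => /andP[fuy /orP[/eqP-> | cyw]] /descent_ball xy.
  by apply: subsetP xy; apply: sub_ball; lia.
have [cx_gt0 _ _] := gc (subsetP core_sub x xc).
have := ball_trans (ball_step uw (fe fuy)) xy.
by have [cy_gt0 _ _] := gc (f_in fuy).2; apply: subsetP; apply: sub_ball; lia.
Qed.

Lemma core_Gset : core \subset Gset e u \/ core \subset Gset e w.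
Proof.
have du : c u - 1 <= deg e u := grundy_col_deg fe gc uS.
have dw : c u - 1 <= deg e w.
  by have := grundy_col_deg fe grundy_col_swap w_core; rewrite /swap_col eqxx.
have ewu : e w u by rewrite fe // fS.1.
have [le_wu | lt_uw] := leqP (deg e w) (deg e u); [left | right].
  apply: subset_trans core_ball_u (sub_ball _ _ _).
  exact: leq_trans dw (Delta_ge (fe fuw) le_wu).
apply: subset_trans core_ball_w (sub_ball _ _ _).
exact: leq_trans du (Delta_ge ewu (ltnW lt_uw)).
Qed.

End Core.

Lemma min_grundy_subgraph_local (T : finType) (e : rel T) (S : {set T}) f c u :
  subgraph e S f -> u \in S -> grundyb S f (c u) c ->
  (forall S' f', subgraph e S' f' -> u \in S' -> grundyb S' f' (c u) c -> #|S| <= #|S'|) ->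
  [/\ S \subset ball e u (c u - 1), c u - 1 <= deg e u &
      S \subset ball e u (Delta e u) \/ exists w, e u w /\ S \subset ball e w (Delta e w)].
Proof.
move=> fS uS /grundybE[gc _] S_min; have fe : subrel f e by move=> a b /fS.2[].
have S_eq (S1 : {set T}) : S1 \subset S -> u \in S1 -> grundy_col S1 f c ->
    {in S1, forall x, c x <= c u} -> S1 = S.
  move=> S1S uS1 gc1 top1; apply/eqP; rewrite eqEcard S1S.
  exact: S_min (subgraph_induced _ fS) uS1 (grundyb_top (grundy_col_induced gc1) uS1 top1).
have du := grundy_col_deg fe gc uS.
have [cu_le1 | cu_gt1] := leqP (c u) 1.
  have <- : [set u] = S.
    apply: S_eq (grundy_col_set1 gc uS cu_le1) _ => [| | x /set1P->];
      by rewrite ?sub1set ?set11.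
  by rewrite !sub1set !ball_center; split=> //; left.
have [_ _ /(_ (c u - 1))[|w _ [fuw cw]]] := gc u uS; first by lia.
have <- := S_eq _ (core_sub c w fS uS) (u_core f c u w)
  (grundy_col_core fS gc uS fuw cw) (core_top fS gc uS fuw cw).
split=> //; first exact: (core_ball_u fS gc uS fuw cw).
by case: (core_Gset fS gc uS fuw cw); [left | right; exists w; rewrite fe].
Qed.

Section LocalGrundyNumber.
Variables (T : finType) (e : rel T).
Hypotheses (e_sym : symmetric e) (e_irr : irreflexive e).

Lemma local_gamma_v_ge_colour c u :
  grundy_col [set: T] e c -> exists v, c u <= gamma_v (Gset e v) e v.
Proof.
move=> gc; have eT : subgraph e [set: T] e by split=> // a b eab; rewrite !inE.
have uT := in_setT u; have [cu_le1 | cu_gt1] := leqP (c u) 1.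
  exists u; apply: (grundy_col_gamma_v e_sym e_irr (S := [set u])) (set11 u).
    by rewrite sub1set ball_center.
  exact: grundy_col_set1 gc uT cu_le1.
have [_ _ /(_ (c u - 1))[|w _ [euw cw]]] := gc u uT; first by lia.
have gcore := grundy_col_core eT gc uT euw cw.
have gswap := grundy_col_swap eT gc uT euw cw.
case: (core_Gset eT gc uT euw cw) => coreG; [exists u | exists w].
  exact: (grundy_col_gamma_v e_sym e_irr coreG gcore (u_core e c u w)).
have := grundy_col_gamma_v e_sym e_irr coreG gswap (w_core c euw).
by rewrite /swap_col eqxx.
Qed.

Lemma gamma_le_max_local_gamma_v :
  gamma [set: T] e <= \max_(v : T) gamma_v (Gset e v) e v.
Proof.
apply/bigmax_leqP => k /existsP[cf /grundybE[gc <-]]; apply/bigmax_leqP => u _.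
have [v le_uv] := local_gamma_v_ge_colour u gc; apply: leq_trans le_uv _.
exact: (leq_bigmax (F := fun v => gamma_v (Gset e v) e v)).
Qed.

End LocalGrundyNumber.

Theorem proposition8 (T : finType) (e : rel T)
    (e_sym : symmetric e) (e_irr : irreflexive e) :
  (* (i) *)
  (forall (c : T -> nat) (k : nat) (u : T),
     grundyb [set: T] e k c -> c u = k ->
     forall (S : {set T}) (f : rel T),
       subgraph e S f -> u \in S -> grundyb S f k c ->
       (forall (S' : {set T}) (f' : rel T),
          subgraph e S' f' -> u \in S' -> grundyb S' f' k c -> #|S| <= #|S'|) ->
       [/\ S \subset ball e u (k - 1),
           ball e u (k - 1) \subset ball e u (deg e u) &
           (S \subset ball e u (Delta e u) \/
            exists w, e u w /\ S \subset ball e w (Delta e w))])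
  /\
  (* (ii) *)
  (gamma [set: T] e = \max_(v : T) gamma (Gset e v) e /\
   gamma [set: T] e = \max_(v : T) gamma_v (Gset e v) e v).
Proof.
split.
  move=> c k u _ <- S f fS uS gS S_min.
  have [S_ball du S_local] := min_grundy_subgraph_local fS uS gS S_min.
  by split=> //; apply: sub_ball.
have le_vG : \max_(v : T) gamma_v (Gset e v) e v <= \max_(v : T) gamma (Gset e v) e.
  apply/bigmax_leqP => v _; apply: leq_trans (leq_bigmax v).
  exact/gamma_v_le_gamma/ball_center.
have le_GT : \max_(v : T) gamma (Gset e v) e <= gamma [set: T] e.
  by apply/bigmax_leqP => v _; apply: gamma_subset (subsetT _).
have le_Tv := gamma_le_max_local_gamma_v e_sym e_irr.
by split; apply/eqP; rewrite eqn_leq; apply/andP; split; lia.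
Qed.
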